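(* Let $\mathbb{B}$ be the open unit ball centered at the origin in $\mathbb{H}$ and let $F:\mathbb{B}\to M_n(\mathbb{H})$ be a quaternionic matrix-valued regular function. If $q\mapsto\Vert F(q)\Vert$ attains its maximum at some point of $\mathbb{B}$, then $\Vert F(q)\Vert$ is constant on $\mathbb{B}$.
   Context: $\mathbb{H}$ denotes the real quaternions. A function $f:\mathbb{B}\to\mathbb{H}$ is (left) regular if it has a power series representation $f(q)=\sum_{n\ge0}q^n f_n$ with $f_n\in\mathbb{H}$ convergent on $\mathbb{B}$ (equivalently, for each imaginary unit $I$ with $I^2=-1$, its restriction to $\mathbb{B}\cap(\mathbb{R}+\mathbb{R}I)$ is holomorphic in the sense $\frac12(\partial_x+I\partial_y)f(x+yI)=0$). $F:\mathbb{B}\to M_n(\mathbb{H})$ is regular if each entry is regular. $\Vert A\Vert=\sup_{x\neq0}\Vert Ax\Vert_2/\Vert x\Vert_2$ is the operator norm of $A\in M_n(\mathbb{H})$ acting on $\mathbb{H}^n$ with the Euclidean norm $\Vert x\Vert_2=(x^*x)^{1/2}$. *)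

From Stdlib Require Import Reals.
From Coquelicot Require Import Coquelicot.
Open Scope R_scope.

Record quat := Quat { qre : R; qi : R; qj : R; qk : R }.

Definition qzero : quat := Quat 0 0 0 0.
Definition qone : quat := Quat 1 0 0 0.
Definition qadd (p q : quat) : quat :=
  Quat (qre p + qre q) (qi p + qi q) (qj p + qj q) (qk p + qk q).
(* Hamilton product (i^2 = j^2 = k^2 = ijk = -1). *)
Definition qmul (p q : quat) : quat :=
  Quat (qre p * qre q - qi p * qi q - qj p * qj q - qk p * qk q)
       (qre p * qi q + qi p * qre q + qj p * qk q - qk p * qj q)
       (qre p * qj q - qi p * qk q + qj p * qre q + qk p * qi q)
       (qre p * qk q + qi p * qj q - qj p * qi q + qk p * qre q).
Fixpoint qpow (q : quat) (n : nat) : quat :=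
  match n with O => qone | S m => qmul q (qpow q m) end.
Definition qnorm2 (q : quat) : R :=
  qre q ^ 2 + qi q ^ 2 + qj q ^ 2 + qk q ^ 2.
Definition qnorm (q : quat) : R := sqrt (qnorm2 q).

Definition in_ball (q : quat) : Prop := qnorm q < 1.

Fixpoint rsum (N : nat) (f : nat -> R) : R :=
  match N with O => 0 | S m => rsum m f + f m end.
Fixpoint qsum (N : nat) (f : nat -> quat) : quat :=
  match N with O => qzero | S m => qadd (qsum m f) (f m) end.

(* Convergence of a quaternion sequence (componentwise = in norm). *)
Definition qcv (u : nat -> quat) (l : quat) : Prop :=
  Un_cv (fun n => qre (u n)) (qre l) /\ Un_cv (fun n => qi (u n)) (qi l) /\
  Un_cv (fun n => qj (u n)) (qj l) /\ Un_cv (fun n => qk (u n)) (qk l).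

(* (Left) regular function on B: f(q) = sum_n q^n f_n, convergent on B. *)
Definition regular (f : quat -> quat) : Prop :=
  exists a : nat -> quat, forall q, in_ball q ->
    qcv (fun N => qsum N (fun k => qmul (qpow q k) (a k))) (f q).

(* Matrices in M_n(H) are represented as functions nat -> nat -> quat,
   only the entries (i, j) with i, j < n being relevant; vectors of H^n
   as functions nat -> quat, only entries i < n being relevant. *)
Definition qmat := nat -> nat -> quat.
Definition qvec := nat -> quat.

Definition mat_regular (n : nat) (F : quat -> qmat) : Prop :=
  forall i j, (i < n)%nat -> (j < n)%nat -> regular (fun q => F q i j).

Definition vnorm (n : nat) (x : qvec) : R := sqrt (rsum n (fun i => qnorm2 (x i))).

Definition mat_vec (n : nat) (A : qmat) (x : qvec) : qvec :=
  fun i => qsum n (fun j => qmul (A i j) (x j)).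

Definition opnorm (n : nat) (A : qmat) : R :=
  real (Lub_Rbar (fun r => exists x : qvec,
     (exists i, (i < n)%nat /\ x i <> qzero) /\
     r = vnorm n (mat_vec n A x) / vnorm n x)).

(* For unit vectors v, x of H^n, the real pairing phi_{v,x}(q) = Re <v, F(q) x>
   is at most ||F(q)|| <= M := ||F(q0)||, and ||F(q)|| is the supremum of these
   pairings.  On a slice L_I = R + R I, identified with C, the power series of F
   makes phi_{v,x} the real part of a power series sum_k c_k z^k whose
   coefficients are bounded uniformly in (v, x).  Averaging over the N-th roots
   of unity is exact on polynomials of degree < N, so the mean of phi_{v,x} over
   N equally spaced points of a circle in the slice equals its value at the
   centre up to O(N lambda^N), uniformly in (v, x).  As M - phi_{v,x} >= 0, a
   pair that nearly attains M at the centre nearly attains it on the whole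
   circle.  Chaining circles through the origin, where all slices meet, a pair
   nearly attaining ||F(q0)|| at q0 nearly attains it at any q, so
   ||F(q)|| >= ||F(q0)||. *)

From Stdlib Require Import Reals Lra Lia Classical ClassicalEpsilon.
From Coquelicot Require Import Coquelicot.
From mathcomp Require Import all_boot all_order all_algebra Rstruct.
Import Order.TTheory GRing.Theory Num.Theory.
From mathcomp.real_closed Require Import complex.
Import ComplexField.Normc.
From mathcomp Require ring lra.
Set Warnings "-notation-overridden -ambiguous-paths".
Open Scope R_scope.

Section MeanOverRootsOfUnity.
Local Open Scope ring_scope.

Lemma sum_prim_root_expr_eq0 (F : idomainType) (N m : nat) (om : F) :
  N.-primitive_root om -> ~~ (N %| m)%N -> \sum_(j < N) om ^+ (j * m) = 0.
Proof.
move=> prim_om Nm; set y := om ^+ m.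
have y1 : y != 1 by rewrite /y -(prim_order_dvd prim_om).
have yN : y ^+ N = 1 by rewrite /y -exprM mulnC exprM (prim_expr_order prim_om) expr1n.
rewrite (eq_bigr (fun j : 'I_N => y ^+ j)) => [|j _]; last by rewrite -exprM mulnC.
have /esym/eqP := subrX1 y N; rewrite yN subrr mulf_eq0 subr_eq0 (negbTE y1).
exact/eqP.
Qed.

Lemma sum_prim_root_exprDn (F : fieldType) (N k : nat) (om z w : F) :
  N.-primitive_root om -> (k < N)%N ->
  \sum_(j < N) (z + w * om ^+ j) ^+ k = N%:R * z ^+ k.
Proof.
move=> prim_om kN.
have -> : \sum_(j < N) (z + w * om ^+ j) ^+ k
    = \sum_(i < k.+1) (z ^+ (k - i) * w ^+ i) *+ 'C(k, i) * \sum_(j < N) om ^+ (j * i).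
  under eq_bigr do rewrite exprDn.
  rewrite exchange_big /=; apply: eq_bigr => i _; rewrite mulr_sumr.
  by apply: eq_bigr => j _; rewrite exprMn -exprM mulnC mulrnAl mulrA.
rewrite big_ord_recl [X in _ + X]big1 /= => [|i _]; last first.
  rewrite sum_prim_root_expr_eq0 ?mulr0 //.
  rewrite /bump add1n; apply: contraL kN => /(dvdn_leq (ltn0Sn i)) Ni.
  by rewrite -leqNgt (leq_trans Ni).
under eq_bigr do rewrite muln0 expr0.
by rewrite subn0 expr0 mulr1 bin0 mulr1n sumr_const card_ord addr0 mulrC.
Qed.

Lemma geometric_tail_le {F : realFieldType} (lam : F) (N K : nat) :
  0 <= lam < 1 -> \sum_(N <= k < K) lam ^+ k <= lam ^+ N / (1 - lam).
Proof.
move=> /andP[lam_ge0 lam_lt1]; have lam1 : 0 < 1 - lam by rewrite subr_gt0.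
have tail_ge0 : 0 <= lam ^+ N / (1 - lam) by rewrite divr_ge0 ?exprn_ge0 ?(ltW lam1).
have [KN|NK] := leqP K N; first by rewrite big_geq.
rewrite -{1}[N]add0n big_addn big_mkord.
under eq_bigr do rewrite exprD.
rewrite -mulr_suml mulrC ler_pdivlMr // -mulrA ler_piMr ?exprn_ge0 //.
have -> : (\sum_(i < K - N) lam ^+ i) * (1 - lam) = 1 - lam ^+ (K - N).
  by rewrite -opprB mulrN mulrC -subrX1 opprB.
by rewrite gerBl exprn_ge0.
Qed.

Lemma natmul_expr_le {F : realFieldType} (t : F) (N : nat) :
  0 <= t < 1 -> N%:R * t ^+ N <= (1 - t)^-1.
Proof.
move=> t01; have := geometric_tail_le t 0 N t01; rewrite expr0 div1r; apply: le_trans.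
have -> : N%:R * t ^+ N = \sum_(0 <= k < N) t ^+ N by rewrite sumr_const_nat subn0 mulr_natl.
apply: ler_sum_nat => k /andP[_ kN].
by case/andP: t01 => t0 t1; rewrite ler_wiXn2l // ?(ltW t1) // ltnW.
Qed.

End MeanOverRootsOfUnity.

Section MeanValueDefect.
Import mathcomp.algebra_tactics.ring mathcomp.algebra_tactics.lra.
Local Open Scope ring_scope.
Context {R : rcfType}.
Implicit Types z w : R[i].

Lemma normc_ge0 z : 0 <= normc z.
Proof. by case: z => a b; apply: sqrtr_ge0. Qed.

Lemma normc_real (c : R) : normc c%:C%C = `|c|.
Proof. by rewrite /normc /= expr0n /= addr0 sqrtr_sqr. Qed.

Lemma normc_Re_le z : `|Re z| <= normc z.
Proof.
case: z => a b /=; rewrite -sqrtr_sqr ler_sqrt ?lerDl ?sqr_ge0 //.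
by rewrite addr_ge0 ?sqr_ge0.
Qed.

Lemma normc_le_abs (a b : R) : normc (Complex a b) <= `|a| + `|b|.
Proof.
have ab_ge0 : 0 <= `|a| + `|b| by rewrite addr_ge0.
have : a ^+ 2 + b ^+ 2 <= (`|a| + `|b|) ^+ 2.
  rewrite sqrrD !real_normK ?num_real //; have := mulr_ge0 (normr_ge0 a) (normr_ge0 b); lra.
move=> h; rewrite /normc /= -(ger0_norm ab_ge0) -(sqrtr_sqr (`|a| + `|b|)).
by rewrite ler_sqrt ?sqr_ge0.
Qed.

Lemma Re_natmul (m : nat) z : Re (m%:R * z) = m%:R * Re z.
Proof. by rewrite !mulr_natl raddfMn. Qed.

Lemma normc_expr z k : normc (z ^+ k) = normc z ^+ k.
Proof. by elim: k => [|k IH]; rewrite ?normc1 // !exprS normcM IH. Qed.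

Lemma normc_circle_le z w om (j : nat) :
  normc om = 1 -> normc (z + w * om ^+ j) <= normc z + normc w.
Proof.
by move=> om1; rewrite (le_trans (le_normcD _ _)) // normcM normc_expr om1 expr1n mulr1.
Qed.

Lemma normc_sum_le (I : Type) (r : seq I) (P : pred I) (f : I -> R[i]) :
  normc (\sum_(i <- r | P i) f i) <= \sum_(i <- r | P i) normc (f i).
Proof.
apply: (big_ind2 (fun a b => normc a <= b)) => [|a a' b b' ha hb|//].
  by rewrite normc0.
exact: le_trans (le_normcD _ _) (lerD ha hb).
Qed.

Lemma mean_value_defect {c : nat -> R[i]} {K N : nat} {om z w : R[i]} {D lam : R} :
  N.-primitive_root om -> normc om = 1 -> 0 <= lam < 1 ->
  (forall k, normc (c k) * (normc z + normc w) ^+ k <= D * lam ^+ k) ->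
  normc (\sum_(j < N) \sum_(k < K) c k * (z + w * om ^+ j) ^+ k
         - N%:R * \sum_(k < K) c k * z ^+ k)
    <= 2 * N%:R * D * (lam ^+ N / (1 - lam)).
Proof.
(* Only the tail [k >= N] survives, by [sum_prim_root_exprDn]. *)
move=> prim_om om1 lam01 c_le; set rho := normc z + normc w.
have rho_ge0 : 0 <= rho by rewrite addr_ge0 ?normc_ge0.
have D_ge0 : 0 <= D.
  by have := c_le 0%N; rewrite !expr0 !mulr1; apply: le_trans; apply: normc_ge0.
pose E k := \sum_(j < N) (z + w * om ^+ j) ^+ k - N%:R * z ^+ k.
have E_lowdeg k : (k < N)%N -> E k = 0.
  by move=> kN; rewrite /E sum_prim_root_exprDn ?subrr.
have E_le k : normc (E k) <= 2 * N%:R * rho ^+ k.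
  have zj_le (j : 'I_N) : normc ((z + w * om ^+ j) ^+ k) <= rho ^+ k.
    by rewrite normc_expr lerXn2r ?nnegrE ?normc_ge0 ?normc_circle_le.
  have z_le : normc z ^+ k <= rho ^+ k by rewrite lerXn2r ?nnegrE ?normc_ge0 // lerDl normc_ge0.
  apply: le_trans (le_normcD _ _) _; rewrite normcN normcM normc_expr.
  rewrite -(rmorph_nat (real_complex R)) normc_real ger0_norm ?ler0n //.
  have sum_le : normc (\sum_(j < N) (z + w * om ^+ j) ^+ k) <= \sum_(j < N) rho ^+ k.
    exact: le_trans (normc_sum_le _ _ _ _) (ler_sum _ (fun j _ => zj_le j)).
  apply: le_trans (lerD sum_le (ler_wpM2l (ler0n R N) z_le)) _.
  by rewrite sumr_const card_ord -mulr_natl; lra.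
have -> : \sum_(j < N) \sum_(k < K) c k * (z + w * om ^+ j) ^+ k
     - N%:R * \sum_(k < K) c k * z ^+ k = \sum_(k < K | (N <= k)%N) c k * E k.
  rewrite [RHS]big_mkcond exchange_big mulr_sumr -sumrB /=; apply: eq_bigr => k _.
  transitivity (c k * E k); first by rewrite /E mulrBr mulr_sumr mulrCA.
  by case: leqP => // /E_lowdeg ->; rewrite mulr0.
apply: le_trans (normc_sum_le _ _ _ _) _.
have term_le k : normc (c k * E k) <= 2 * N%:R * D * lam ^+ k.
  rewrite normcM; apply: le_trans (ler_wpM2l (normc_ge0 _) (E_le k)) _.
  have := ler_wpM2l (ler0n _ (2 * N)%N) (c_le k); rewrite natrM; nra.
apply: le_trans (ler_sum _ (fun (k : 'I_K) _ => term_le k)) _.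
rewrite -mulr_sumr ler_wpM2l ?mulr_ge0 ?ler0n //.
by have := geometric_tail_le lam N K lam01; rewrite big_geq_mkord.
Qed.

Lemma Re_mean_value_defect (c : nat -> R[i]) (K N : nat) (om z w : R[i]) (D lam : R) :
  N.-primitive_root om -> normc om = 1 -> 0 <= lam < 1 ->
  (forall k, normc (c k) * (normc z + normc w) ^+ k <= D * lam ^+ k) ->
  `|\sum_(j < N) Re (\sum_(k < K) c k * (z + w * om ^+ j) ^+ k)
    - N%:R * Re (\sum_(k < K) c k * z ^+ k)| <= 2 * N%:R * D * (lam ^+ N / (1 - lam)).
Proof.
move=> prim_om om1 lam01 c_le; apply: le_trans (mean_value_defect prim_om om1 lam01 c_le).
by rewrite -Re_natmul -raddf_sum -raddfB; apply: normc_Re_le.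
Qed.

End MeanValueDefect.

Section QuaternionAlgebra.

Definition qscal (c : R) (p : quat) : quat :=
  Quat (c * qre p) (c * qi p) (c * qj p) (c * qk p).
Definition qdot (p q : quat) : R :=
  qre p * qre q + qi p * qi q + qj p * qj q + qk p * qk q.

Lemma qnorm2_ge0 p : 0 <= qnorm2 p.
Proof. unfold qnorm2; nra. Qed.

Lemma qnorm2_pos p : p <> qzero -> 0 < qnorm2 p.
Proof.
intros Hp; destruct (Rle_lt_or_eq_dec 0 (qnorm2 p) (qnorm2_ge0 p)) as [h|h]; [exact h|].
exfalso; apply Hp; destruct p as [a b c d]; unfold qnorm2 in h; cbn [qre qi qj qk] in h.
assert (a = 0) by nra; assert (b = 0) by nra; assert (c = 0) by nra; assert (d = 0) by nra.
subst; reflexivity.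
Qed.

Lemma qnorm_ge0 p : 0 <= qnorm p.
Proof. apply sqrt_pos. Qed.

Lemma qnorm_mul_self p : qnorm p * qnorm p = qnorm2 p.
Proof. apply sqrt_sqrt, qnorm2_ge0. Qed.

Lemma qnorm0 : qnorm qzero = 0.
Proof. unfold qnorm; replace (qnorm2 qzero) with 0 by (unfold qnorm2; simpl; ring); apply sqrt_0. Qed.

Lemma qnorm2M p q : qnorm2 (qmul p q) = qnorm2 p * qnorm2 q.
Proof. unfold qnorm2, qmul; simpl; ring. Qed.

Lemma qnormM p q : qnorm (qmul p q) = qnorm p * qnorm q.
Proof. unfold qnorm; rewrite qnorm2M; apply sqrt_mult_alt, qnorm2_ge0. Qed.

Lemma qnorm_qpow q k : qnorm (qpow q k) = qnorm q ^ k.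
Proof.
induction k as [|k IH]; simpl; [|rewrite qnormM IH; reflexivity].
unfold qnorm; replace (qnorm2 qone) with 1 by (unfold qnorm2; simpl; ring); apply sqrt_1.
Qed.

Lemma qnorm2_scal c p : qnorm2 (qscal c p) = c * c * qnorm2 p.
Proof. unfold qnorm2, qscal; simpl; ring. Qed.

Lemma qdot_self p : qdot p p = qnorm2 p.
Proof. unfold qdot, qnorm2; ring. Qed.

Lemma qdot_abs_le p q : Rabs (qdot p q) <= qnorm p * qnorm q.
Proof.
apply Rsqr_incr_0_var; [|apply Rmult_le_pos; apply qnorm_ge0].
rewrite <- Rsqr_abs; unfold Rsqr.
replace (qnorm p * qnorm q * (qnorm p * qnorm q)) with
  ((qnorm p * qnorm p) * (qnorm q * qnorm q)) by ring.
rewrite !qnorm_mul_self.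
destruct p as [a b c d], q as [e f g h]; unfold qdot, qnorm2; simpl.
(* Lagrange's identity in dimension 4. *)
assert (0 <= (a*f-b*e)^2 + (a*g-c*e)^2 + (a*h-d*e)^2 + (b*g-c*f)^2 + (b*h-d*f)^2 + (c*h-d*g)^2)
  by (repeat apply Rplus_le_le_0_compat; apply pow2_ge_0).
nra.
Qed.

Lemma qdot_le p q : qdot p q <= qnorm p * qnorm q.
Proof. eapply Rle_trans; [apply RRle_abs | apply qdot_abs_le]. Qed.

Lemma qnorm_triangle p q : qnorm (qadd p q) <= qnorm p + qnorm q.
Proof.
apply Rsqr_incr_0_var; [|pose proof (qnorm_ge0 p); pose proof (qnorm_ge0 q); lra].
unfold Rsqr; rewrite qnorm_mul_self.
replace ((qnorm p + qnorm q) * (qnorm p + qnorm q)) with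
  (qnorm p * qnorm p + qnorm q * qnorm q + 2 * (qnorm p * qnorm q)) by ring.
rewrite !qnorm_mul_self; pose proof (qdot_le p q).
replace (qnorm2 (qadd p q)) with (qnorm2 p + qnorm2 q + 2 * qdot p q)
  by (unfold qnorm2, qdot, qadd; simpl; ring).
lra.
Qed.

Lemma qnorm_le_abs_sum p : qnorm p <= Rabs (qre p) + Rabs (qi p) + Rabs (qj p) + Rabs (qk p).
Proof.
pose proof (Rabs_pos (qre p)); pose proof (Rabs_pos (qi p)).
pose proof (Rabs_pos (qj p)); pose proof (Rabs_pos (qk p)).
apply Rsqr_incr_0_var; [|lra].
unfold Rsqr; rewrite qnorm_mul_self; unfold qnorm2.
rewrite <- (pow2_abs (qre p)), <- (pow2_abs (qi p)), <- (pow2_abs (qj p)), <- (pow2_abs (qk p)).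
nra.
Qed.

Lemma qmul_qadd_l p q x : qmul (qadd p q) x = qadd (qmul p x) (qmul q x).
Proof. unfold qmul, qadd; simpl; f_equal; ring. Qed.

Lemma qdot_qadd p q r : qdot p (qadd q r) = qdot p q + qdot p r.
Proof. unfold qdot, qadd; simpl; ring. Qed.

End QuaternionAlgebra.

Section FiniteSums.

Lemma rsum_ext N f g : (forall i, (i < N)%coq_nat -> f i = g i) -> rsum N f = rsum N g.
Proof.
induction N as [|N IH]; simpl; intros H; [reflexivity|].
rewrite IH; [f_equal; apply H; lia | intros i Hi; apply H; lia].
Qed.

Lemma rsum_le N f g : (forall i, (i < N)%coq_nat -> f i <= g i) -> rsum N f <= rsum N g.
Proof.
induction N as [|N IH]; simpl; intros H; [apply Rle_refl|].
apply Rplus_le_compat; [apply IH; intros i Hi|]; apply H; lia.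
Qed.

Lemma rsum_const N c : rsum N (fun _ => c) = INR N * c.
Proof. induction N as [|N IH]; [simpl; ring|]; rewrite S_INR; simpl; rewrite IH; ring. Qed.

Lemma rsum_ge0 N f : (forall i, (i < N)%coq_nat -> 0 <= f i) -> 0 <= rsum N f.
Proof.
intros H; apply Rle_trans with (rsum N (fun _ => 0)); [|apply rsum_le; exact H].
rewrite rsum_const; lra.
Qed.

Lemma rsum_plus N f g : rsum N (fun i => f i + g i) = rsum N f + rsum N g.
Proof. induction N as [|N IH]; simpl; [|rewrite IH]; ring. Qed.

Lemma rsum_minus N f g : rsum N (fun i => f i - g i) = rsum N f - rsum N g.
Proof. induction N as [|N IH]; simpl; [|rewrite IH]; ring. Qed.

Lemma rsum_scal N c f : rsum N (fun i => c * f i) = c * rsum N f.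
Proof. induction N as [|N IH]; simpl; [|rewrite IH]; ring. Qed.

Lemma rsum_abs_le N f : Rabs (rsum N f) <= rsum N (fun i => Rabs (f i)).
Proof.
induction N as [|N IH]; simpl; [rewrite Rabs_R0; apply Rle_refl|].
eapply Rle_trans; [apply Rabs_triang | apply Rplus_le_compat_r, IH].
Qed.

Lemma rsum_term_le N f i :
  (forall j, (j < N)%coq_nat -> 0 <= f j) -> (i < N)%coq_nat -> f i <= rsum N f.
Proof.
induction N as [|N IH]; intros H Hi; [lia|]; simpl.
assert (0 <= rsum N f) by (apply rsum_ge0; intros j Hj; apply H; lia).
assert (0 <= f N) by (apply H; lia).
destruct (Nat.eq_dec i N) as [->|Hne]; [lra|].
assert (f i <= rsum N f) by (apply IH; [intros j Hj; apply H|]; lia).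
lra.
Qed.

Lemma rsum_big N (f : nat -> R) : rsum N f = (\sum_(j < N) f j)%R.
Proof. elim: N => [|N IH] /=; first by rewrite big_ord0. by rewrite big_ord_recr /= IH. Qed.

Lemma rsum_cauchy_schwarz N a b :
  rsum N (fun i => a i * b i) * rsum N (fun i => a i * b i)
    <= rsum N (fun i => a i * a i) * rsum N (fun i => b i * b i).
Proof.
induction N as [|N IH]; simpl; [lra|].
set (P := rsum N (fun i => a i * b i)) in *.
set (A := rsum N (fun i => a i * a i)) in *.
set (B := rsum N (fun i => b i * b i)) in *.
assert (HA : 0 <= A) by (apply rsum_ge0; intros; apply Rle_0_sqr).
assert (HB : 0 <= B) by (apply rsum_ge0; intros; apply Rle_0_sqr).
set (x := a N); set (y := b N).
(* AM-GM: [2 |P x y| <= A y^2 + B x^2] since [P^2 <= A B]. *)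
assert (2 * P * x * y <= A * y * y + x * x * B).
{ apply Rsqr_incr_0_var; unfold Rsqr; [|nra].
  assert (P * P * (x * x * (y * y)) <= A * B * (x * x * (y * y)))
    by (apply Rmult_le_compat_r; [nra | exact IH]).
  pose proof (Rle_0_sqr (A * y * y - x * x * B)); unfold Rsqr in *; nra. }
nra.
Qed.

Lemma qsum_re N f : qre (qsum N f) = rsum N (fun k => qre (f k)).
Proof. induction N as [|N IH]; simpl; [|rewrite IH]; reflexivity. Qed.

Lemma qsum_i N f : qi (qsum N f) = rsum N (fun k => qi (f k)).
Proof. induction N as [|N IH]; simpl; [|rewrite IH]; reflexivity. Qed.

Lemma qsum_j N f : qj (qsum N f) = rsum N (fun k => qj (f k)).
Proof. induction N as [|N IH]; simpl; [|rewrite IH]; reflexivity. Qed.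

Lemma qsum_k N f : qk (qsum N f) = rsum N (fun k => qk (f k)).
Proof. induction N as [|N IH]; simpl; [|rewrite IH]; reflexivity. Qed.

Lemma qsum_ext N f g : (forall i, (i < N)%coq_nat -> f i = g i) -> qsum N f = qsum N g.
Proof.
induction N as [|N IH]; simpl; intros H; [reflexivity|].
rewrite IH; [f_equal; apply H; lia | intros i Hi; apply H; lia].
Qed.

Lemma qsum_qadd N f g : qsum N (fun i => qadd (f i) (g i)) = qadd (qsum N f) (qsum N g).
Proof.
induction N as [|N IH]; simpl; [|rewrite IH]; unfold qadd, qzero; simpl; f_equal; ring.
Qed.

Lemma qnorm_qsum_le N f : qnorm (qsum N f) <= rsum N (fun i => qnorm (f i)).
Proof.
induction N as [|N IH]; simpl; [rewrite qnorm0; apply Rle_refl|].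
eapply Rle_trans; [apply qnorm_triangle | apply Rplus_le_compat_r, IH].
Qed.

Lemma qdot_qsum p N f : qdot p (qsum N f) = rsum N (fun i => qdot p (f i)).
Proof.
induction N as [|N IH]; simpl; [unfold qdot; simpl; ring|].
rewrite qdot_qadd IH; reflexivity.
Qed.

Lemma exists_common_bound (m : nat) (P : nat -> R -> Prop) :
  (forall i c c', P i c -> c <= c' -> P i c') ->
  (forall i, (i < m)%coq_nat -> exists c, P i c) ->
  exists c, forall i, (i < m)%coq_nat -> P i c.
Proof.
intros Pmono; induction m as [|m IH]; intros H; [exists 0; intros; lia|].
destruct IH as [c Hc]; [intros i Hi; apply H; lia|].
destruct (H m ltac:(lia)) as [c' Hc'].
exists (Rmax c c'); intros i Hi; destruct (Nat.eq_dec i m) as [->|Hne].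
- eapply Pmono; [exact Hc' | apply Rmax_r].
- eapply Pmono; [apply Hc; lia | apply Rmax_l].
Qed.

End FiniteSums.

Section RootsOfUnity.

Definition root_unity (N : nat) : R[i] :=
  Complex (cos (2 * PI / INR N)) (sin (2 * PI / INR N)).

Lemma root_unity_expr (N l : nat) :
  (root_unity N ^+ l)%R = Complex (cos (2 * PI / INR N * INR l)) (sin (2 * PI / INR N * INR l)).
Proof.
elim: l => [|l IH]; first by rewrite GRing.expr0 Rmult_0_r cos_0 sin_0.
rewrite GRing.exprS IH S_INR Rmult_plus_distr_l Rmult_1_r Rplus_comm cos_plus sin_plus.
by congr Complex; rewrite -RplusE Rplus_comm.
Qed.

Lemma cos_lt_1 (t : R) : 0 < t < 2 * PI -> cos t < 1.
Proof.
move=> t_bounds; have -> : t = 2 * (t / 2) by field.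
have : 0 < sin (t / 2) by apply: sin_gt_0; lra.
rewrite cos_2a_sin; nra.
Qed.

Lemma root_unity_prim (N : nat) : (0 < N)%N -> (N.-primitive_root (root_unity N))%R.
Proof.
move=> N_gt0; have N_pos : 0 < INR N by apply/lt_0_INR/ssrnat.ltP.
have omN : (root_unity N ^+ N)%R = 1%R.
  rewrite root_unity_expr Rmult_assoc Rinv_l ?Rmult_1_r ?cos_2PI ?sin_2PI //; lra.
have [m prim_m /(dvdn_leq N_gt0)] := prim_order_exists N_gt0 omN.
rewrite leq_eqVlt => /orP[/eqP eq_mN | mN]; first by move: prim_m; rewrite eq_mN.
have m_pos : 0 < INR m by apply/lt_0_INR/ssrnat.ltP/(prim_order_gt0 prim_m).
have mN' : INR m < INR N by apply/lt_INR/ssrnat.ltP.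
have := prim_expr_order prim_m; rewrite root_unity_expr => -[cos1 _].
have m_frac : 0 < INR m / INR N < 1 by split; [exact: Rdiv_lt_0_compat | exact/(Rdiv_lt_1 _ _ N_pos)].
have PI_pos := PI_RGT_0.
have : cos (2 * PI / INR N * INR m) < 1.
  apply: cos_lt_1; have -> : 2 * PI / INR N * INR m = 2 * PI * (INR m / INR N) by field; lra.
  nra.
by rewrite cos1 => /Rlt_irrefl.
Qed.

Lemma normc_root_unity (N : nat) : normc (root_unity N) = 1.
Proof.
rewrite /normc /root_unity -!RpowE -RplusE /= !Rmult_1_r Rplus_comm.
by have := sin2_cos2 (2 * PI / INR N); rewrite /Rsqr => ->; rewrite sqrtr1.
Qed.

Lemma mean_value_defect_root_unity (c : nat -> R[i]) (K N : nat) (z0 w : R[i]) (D lam : R) :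
  (0 < N)%N -> 0 <= lam < 1 ->
  (forall k, normc (c k) * (normc z0 + normc w) ^ k <= D * lam ^ k) ->
  Rabs (rsum N (fun j => Re (\sum_(k < K) c k * (z0 + w * root_unity N ^+ j) ^+ k)%R)
        - INR N * Re (\sum_(k < K) c k * z0 ^+ k)%R)
    <= 2 * INR N * D * (lam ^ N / (1 - lam)).
Proof.
move=> N_gt0 [lam0 lam1] c_le; rewrite rsum_big INRE RpowE; apply/RleP.
apply: Re_mean_value_defect (root_unity_prim N N_gt0) (normc_root_unity N) _ _.
  by apply/andP; split; [apply/RleP | apply/RltP].
by move=> k; rewrite -!RpowE; apply/RleP.
Qed.

End RootsOfUnity.

Section Vectors.
Variable n : nat.
Implicit Types (v w x y : qvec) (A : qmat).

Definition vscal (c : R) y : qvec := fun i => qscal c (y i).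
Definition vdot v w : R := rsum n (fun i => qdot (v i) (w i)).
Definition nonzero_vec x := exists i, (i < n)%coq_nat /\ x i <> qzero.

Lemma vnorm_ge0 y : 0 <= vnorm n y.
Proof. apply sqrt_pos. Qed.

Lemma vnorm_mul_self y : vnorm n y * vnorm n y = rsum n (fun i => qnorm2 (y i)).
Proof. apply sqrt_sqrt, rsum_ge0; intros; apply qnorm2_ge0. Qed.

Lemma vnorm_pos x : nonzero_vec x -> 0 < vnorm n x.
Proof.
intros [i [Hi Hx]]; apply sqrt_lt_R0.
eapply Rlt_le_trans; [apply qnorm2_pos, Hx|].
apply (rsum_term_le n (fun i => qnorm2 (x i))); [intros; apply qnorm2_ge0 | exact Hi].
Qed.

Lemma vnorm_eq0 x : ~ nonzero_vec x -> vnorm n x = 0.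
Proof.
intros Hx; unfold vnorm; rewrite <- sqrt_0; f_equal.
transitivity (rsum n (fun _ => 0)); [|rewrite rsum_const; ring].
apply rsum_ext; intros i Hi.
destruct (classic (x i = qzero)) as [->|Hne]; [|exfalso; apply Hx; now exists i].
unfold qnorm2; simpl; ring.
Qed.

Lemma vnorm_ext y y' : (forall i, (i < n)%coq_nat -> y i = y' i) -> vnorm n y = vnorm n y'.
Proof. intros H; unfold vnorm; f_equal; apply rsum_ext; intros i Hi; rewrite H; auto. Qed.

Lemma qnorm_le_vnorm x i : (i < n)%coq_nat -> qnorm (x i) <= vnorm n x.
Proof.
intros Hi; apply sqrt_le_1_alt.
apply (rsum_term_le n (fun i => qnorm2 (x i))); [intros; apply qnorm2_ge0 | exact Hi].
Qed.

Lemma vnorm_le_sum y : vnorm n y <= rsum n (fun i => qnorm (y i)).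
Proof.
apply Rsqr_incr_0_var; [|apply rsum_ge0; intros; apply qnorm_ge0].
unfold Rsqr; rewrite vnorm_mul_self.
clear; induction n as [|m IH]; simpl; [lra|].
assert (0 <= rsum m (fun i => qnorm (y i))) by (apply rsum_ge0; intros; apply qnorm_ge0).
pose proof (qnorm_ge0 (y m)); rewrite <- qnorm_mul_self; nra.
Qed.

Lemma vnorm_scal c y : vnorm n (vscal c y) = Rabs c * vnorm n y.
Proof.
unfold vnorm, vscal; rewrite <- sqrt_Rsqr_abs, <- sqrt_mult_alt by apply Rle_0_sqr.
f_equal; rewrite <- rsum_scal; apply rsum_ext; intros; apply qnorm2_scal.
Qed.

Lemma vdot_self y : vdot y y = vnorm n y * vnorm n y.
Proof. rewrite vnorm_mul_self; apply rsum_ext; intros; apply qdot_self. Qed.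

Lemma vdot_cauchy_schwarz v w : vdot v w <= vnorm n v * vnorm n w.
Proof.
eapply Rle_trans; [apply (rsum_le n _ (fun i => qnorm (v i) * qnorm (w i))); intros; apply qdot_le|].
apply Rsqr_incr_0_var; [|apply Rmult_le_pos; apply vnorm_ge0].
unfold Rsqr.
replace (vnorm n v * vnorm n w * (vnorm n v * vnorm n w))
  with ((vnorm n v * vnorm n v) * (vnorm n w * vnorm n w)) by ring.
rewrite !vnorm_mul_self.
eapply Rle_trans; [apply rsum_cauchy_schwarz|].
right; f_equal; apply rsum_ext; intros; apply qnorm_mul_self.
Qed.

Lemma vdot_scal_l c v w : vdot (vscal c v) w = c * vdot v w.
Proof.
unfold vdot, vscal; rewrite <- rsum_scal; apply rsum_ext; intros.
unfold qdot, qscal; simpl; ring.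
Qed.

Lemma vdot_ext v w w' : (forall i, (i < n)%coq_nat -> w i = w' i) -> vdot v w = vdot v w'.
Proof. intros H; apply rsum_ext; intros i Hi; rewrite H; auto. Qed.

Lemma vdot_qadd v w1 w2 : vdot v (fun i => qadd (w1 i) (w2 i)) = vdot v w1 + vdot v w2.
Proof. unfold vdot; rewrite <- rsum_plus; apply rsum_ext; intros; apply qdot_qadd. Qed.

Lemma mat_vec_scal A c x i : mat_vec n A (vscal c x) i = qscal c (mat_vec n A x i).
Proof.
unfold mat_vec, vscal; clear; induction n as [|m IH]; simpl.
- unfold qscal, qzero; simpl; f_equal; ring.
- rewrite IH; unfold qscal, qmul, qadd; simpl; f_equal; ring.
Qed.

Lemma mat_vec_bound A : exists K, forall x, vnorm n (mat_vec n A x) <= K * vnorm n x.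
Proof.
exists (rsum n (fun i => rsum n (fun j => qnorm (A i j)))); intros x.
eapply Rle_trans; [apply vnorm_le_sum|].
rewrite Rmult_comm -rsum_scal; apply rsum_le; intros i Hi.
eapply Rle_trans; [apply qnorm_qsum_le|].
rewrite <- rsum_scal; apply rsum_le; intros j Hj.
rewrite qnormM; pose proof (qnorm_le_vnorm x j Hj); pose proof (qnorm_ge0 (A i j)); nra.
Qed.

Definition ratio_set A (r : R) : Prop :=
  exists x, nonzero_vec x /\ r = vnorm n (mat_vec n A x) / vnorm n x.

Hypothesis n_pos : (0 < n)%coq_nat.

Lemma nonzero_vec_ones : nonzero_vec (fun _ => qone).
Proof. exists 0%nat; split; [exact n_pos | unfold qone, qzero; intros E; injection E; lra]. Qed.

Lemma Lub_ratio_set A : Lub_Rbar (ratio_set A) = Rbar.Finite (opnorm n A).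
Proof.
destruct (mat_vec_bound A) as [K HK].
destruct (Lub_Rbar_correct (ratio_set A)) as [ub least].
change (opnorm n A) with (real (Lub_Rbar (ratio_set A))).
destruct (Lub_Rbar (ratio_set A)) as [l| |]; [reflexivity| exfalso..].
- apply (least (Rbar.Finite K)); intros r [x [Hx ->]]; simpl.
  pose proof (vnorm_pos x Hx); apply Rle_div_l; [lra | eapply Rle_trans; [apply HK | right; ring]].
- apply (ub _ (ex_intro _ (fun _ => qone) (conj nonzero_vec_ones erefl))).
Qed.

Lemma opnorm_ratio_le A x : nonzero_vec x -> vnorm n (mat_vec n A x) / vnorm n x <= opnorm n A.
Proof.
intros Hx; pose proof (proj1 (Lub_Rbar_correct (ratio_set A))) as ub.
rewrite Lub_ratio_set in ub; apply ub; now exists x.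
Qed.

Lemma opnorm_le A b : (forall x, nonzero_vec x -> vnorm n (mat_vec n A x) / vnorm n x <= b) ->
  opnorm n A <= b.
Proof.
intros Hb; pose proof (proj2 (Lub_Rbar_correct (ratio_set A)) (Rbar.Finite b)) as least.
rewrite Lub_ratio_set in least; apply least; intros r [x [Hx ->]]; apply Hb, Hx.
Qed.

Lemma opnorm_ge0 A : 0 <= opnorm n A.
Proof.
eapply Rle_trans; [|apply (opnorm_ratio_le A _ nonzero_vec_ones)].
apply Rdiv_le_0_compat; [apply vnorm_ge0 | apply vnorm_pos, nonzero_vec_ones].
Qed.

Lemma opnorm_mul_le A x : vnorm n (mat_vec n A x) <= opnorm n A * vnorm n x.
Proof.
destruct (classic (nonzero_vec x)) as [Hx|Hx].
- pose proof (vnorm_pos x Hx) as Hpos; pose proof (opnorm_ratio_le A x Hx) as Hr.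
  apply (Rle_div_l _ _ _ Hpos) in Hr; lra.
- rewrite (vnorm_eq0 x Hx) Rmult_0_r vnorm_eq0; [lra|].
  intros [i [Hi Hne]]; apply Hne; unfold mat_vec; clear Hi Hne.
  transitivity (qsum n (fun _ => qzero)).
  + apply qsum_ext; intros j Hj.
    destruct (classic (x j = qzero)) as [->|Hxj]; [|exfalso; apply Hx; now exists j].
    unfold qmul, qzero; simpl; f_equal; ring.
  + clear; induction n as [|m IH]; simpl; [reflexivity|].
    rewrite IH; unfold qadd, qzero; simpl; f_equal; ring.
Qed.

(* A near-maximising unit vector [x] of the ratio, paired with the unit vector along [A x]. *)
Lemma opnorm_approx A eps : 0 < eps ->
  exists v x, vnorm n v <= 1 /\ vnorm n x <= 1 /\ opnorm n A - eps < vdot v (mat_vec n A x).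
Proof.
intros He.
destruct (classic (exists x, nonzero_vec x /\
  opnorm n A - eps < vnorm n (mat_vec n A x) / vnorm n x)) as [[x [Hx Hlt]]|Hno].
2:{ exfalso; enough (opnorm n A <= opnorm n A - eps) by lra.
    apply opnorm_le; intros x Hx; apply Rnot_lt_le; intros Hlt; apply Hno; now exists x. }
pose proof (vnorm_pos x Hx) as Hc; set (c := vnorm n x) in *.
set (x' := vscal (/ c) x); set (y := mat_vec n A x'); set (r := vnorm n y).
assert (Hr : r = vnorm n (mat_vec n A x) / c).
{ unfold r, y; rewrite (vnorm_ext _ (vscal (/ c) (mat_vec n A x))).
  - rewrite vnorm_scal Rabs_pos_eq; [unfold Rdiv; ring | apply Rlt_le, Rinv_0_lt_compat, Hc].
  - intros i _; apply mat_vec_scal. }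
(* When [A x' = 0], [/ 0 = 0] makes [v] the zero vector, still with [vdot v y = r]. *)
assert (Hinv : / r * r <= 1).
{ destruct (Req_dec r 0) as [->|Hr0]; [rewrite Rmult_0_r; lra | rewrite Rinv_l; lra]. }
exists (vscal (/ r) y), x'; split; [|split].
- rewrite vnorm_scal Rabs_inv (Rabs_pos_eq r); [exact Hinv | apply vnorm_ge0].
- unfold x'; rewrite vnorm_scal Rabs_inv (Rabs_pos_eq c); [|lra].
  rewrite Rinv_l; lra.
- rewrite vdot_scal_l vdot_self; fold r.
  replace (/ r * (r * r)) with r; [lra|].
  destruct (Req_dec r 0) as [->|Hr0]; [ring | field; exact Hr0].
Qed.

End Vectors.

Lemma opnorm_dim0 A : opnorm 0 A = 0.
Proof.
(* The ratio set is empty: its [Lub_Rbar] is [m_infty], whose [real] part is [0]. *)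
unfold opnorm; destruct (Lub_Rbar_correct (ratio_set 0 A)) as [_ least].
change (real (Lub_Rbar (ratio_set 0 A)) = 0).
assert (H : Rbar_le (Lub_Rbar (ratio_set 0 A)) m_infty).
{ apply least; intros r [x [[i [Hi _]] _]]; lia. }
destruct (Lub_Rbar (ratio_set 0 A)); [contradiction | contradiction | reflexivity].
Qed.

Section Limits.

Lemma Un_cv_ext u w l : (forall K, u K = w K) -> Un_cv u l -> Un_cv w l.
Proof. intros E H eps Heps; destruct (H eps Heps) as [N HN]; exists N; intros m Hm; rewrite <- E; auto. Qed.

Lemma Un_cv_const c : Un_cv (fun _ => c) c.
Proof. intros eps Heps; exists 0%nat; intros m _; unfold Rdist; rewrite Rminus_diag Rabs_R0; exact Heps. Qed.

Lemma Un_cv_scal c u l : Un_cv u l -> Un_cv (fun K => c * u K) (c * l).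
Proof. apply CV_mult, Un_cv_const. Qed.

Lemma Un_cv_lin4 c1 c2 c3 c4 u1 u2 u3 u4 l1 l2 l3 l4 w l :
  Un_cv u1 l1 -> Un_cv u2 l2 -> Un_cv u3 l3 -> Un_cv u4 l4 ->
  (forall K, w K = c1 * u1 K + c2 * u2 K + c3 * u3 K + c4 * u4 K) ->
  l = c1 * l1 + c2 * l2 + c3 * l3 + c4 * l4 -> Un_cv w l.
Proof.
intros H1 H2 H3 H4 Hw ->; apply (Un_cv_ext _ _ _ (fun K => esym (Hw K))).
repeat apply CV_plus; apply Un_cv_scal; assumption.
Qed.

Lemma Un_cv_rsum N (f : nat -> nat -> R) (l : nat -> R) :
  (forall j, (j < N)%coq_nat -> Un_cv (f j) (l j)) ->
  Un_cv (fun K => rsum N (fun j => f j K)) (rsum N l).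
Proof.
induction N as [|N IH]; intros H; simpl; [apply Un_cv_const|].
apply CV_plus; [apply IH; intros j Hj|]; apply H; lia.
Qed.

Lemma Un_cv_abs_le u l B : Un_cv u l -> (forall K, Rabs (u K) <= B) -> Rabs l <= B.
Proof.
intros H HB; apply Rnot_lt_le; intros Hlt.
destruct (H (Rabs l - B)) as [N HN]; [lra|].
specialize (HN N (Nat.le_refl N)); specialize (HB N); unfold Rdist in HN.
pose proof (Rabs_triang_inv l (u N)); rewrite Rabs_minus_sym in HN; lra.
Qed.

Lemma series_terms_bounded t l : Un_cv (fun K => rsum K t) l -> exists c, forall k, Rabs (t k) <= c.
Proof.
intros H; destruct (H 1) as [N HN]; [lra|].
exists (2 + rsum N (fun k => Rabs (t k))); intros k.
assert (0 <= rsum N (fun k => Rabs (t k))) by (apply rsum_ge0; intros; apply Rabs_pos).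
destruct (Nat.lt_ge_cases k N) as [hk|hk].
- pose proof (rsum_term_le N (fun k => Rabs (t k)) k (fun j _ => Rabs_pos (t j)) hk); lra.
- pose proof (HN k hk) as A; pose proof (HN (S k) ltac:(lia)) as B; unfold Rdist in A, B; simpl in B.
  replace (t k) with ((rsum k t + t k - l) - (rsum k t - l)) by ring.
  eapply Rle_trans; [apply Rabs_triang|]; rewrite Rabs_Ropp; lra.
Qed.

Lemma qcv_series_terms_bounded f l :
  qcv (fun K => qsum K f) l -> exists c, forall k, qnorm (f k) <= c.
Proof.
intros [H1 [H2 [H3 H4]]].
destruct (series_terms_bounded _ _ (Un_cv_ext _ _ _ (fun K => qsum_re K f) H1)) as [c1 B1].
destruct (series_terms_bounded _ _ (Un_cv_ext _ _ _ (fun K => qsum_i K f) H2)) as [c2 B2].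
destruct (series_terms_bounded _ _ (Un_cv_ext _ _ _ (fun K => qsum_j K f) H3)) as [c3 B3].
destruct (series_terms_bounded _ _ (Un_cv_ext _ _ _ (fun K => qsum_k K f) H4)) as [c4 B4].
exists (c1 + c2 + c3 + c4); intros k.
specialize (B1 k); specialize (B2 k); specialize (B3 k); specialize (B4 k).
pose proof (qnorm_le_abs_sum (f k)); lra.
Qed.

Lemma qcv_mulr u l c : qcv u l -> qcv (fun K => qmul (u K) c) (qmul l c).
Proof.
intros [H1 [H2 [H3 H4]]]; unfold qcv, qmul; cbn [qre qi qj qk].
split; [|split; [|split]].
- apply (Un_cv_lin4 (qre c) (- qi c) (- qj c) (- qk c) _ _ _ _ _ _ _ _ _ _ H1 H2 H3 H4);
    [intros K|]; ring.
- apply (Un_cv_lin4 (qi c) (qre c) (qk c) (- qj c) _ _ _ _ _ _ _ _ _ _ H1 H2 H3 H4);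
    [intros K|]; ring.
- apply (Un_cv_lin4 (qj c) (- qk c) (qre c) (qi c) _ _ _ _ _ _ _ _ _ _ H1 H2 H3 H4);
    [intros K|]; ring.
- apply (Un_cv_lin4 (qk c) (qj c) (- qi c) (qre c) _ _ _ _ _ _ _ _ _ _ H1 H2 H3 H4);
    [intros K|]; ring.
Qed.

Lemma qcv_qsum N (u : nat -> nat -> quat) (l : nat -> quat) :
  (forall j, (j < N)%coq_nat -> qcv (u j) (l j)) ->
  qcv (fun K => qsum N (fun j => u j K)) (qsum N l).
Proof.
induction N as [|N IH]; intros H.
- simpl; repeat split; apply Un_cv_const.
- destruct (IH (fun j Hj => H j ltac:(lia))) as [A1 [A2 [A3 A4]]].
  destruct (H N ltac:(lia)) as [B1 [B2 [B3 B4]]].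
  simpl; repeat split; apply CV_plus; assumption.
Qed.

Lemma Un_cv_qdot p u l : qcv u l -> Un_cv (fun K => qdot p (u K)) (qdot p l).
Proof.
intros [H1 [H2 [H3 H4]]].
now apply (Un_cv_lin4 (qre p) (qi p) (qj p) (qk p) _ _ _ _ _ _ _ _ _ _ H1 H2 H3 H4).
Qed.

Lemma Un_cv_vdot n v (w : nat -> qvec) (l : qvec) :
  (forall i, (i < n)%coq_nat -> qcv (fun K => w K i) (l i)) ->
  Un_cv (fun K => vdot n v (w K)) (vdot n v l).
Proof.
intros H; apply (Un_cv_rsum n (fun i K => qdot (v i) (w K i))); intros i Hi.
apply Un_cv_qdot, H, Hi.
Qed.

Lemma exists_nat_mul_pow_lt lam eps : 0 <= lam < 1 -> 0 < eps ->
  exists N, (0 < N)%N /\ INR N * lam ^ N < eps.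
Proof.
intros [lam0 lam1] eps_pos; set (t := sqrt lam).
assert (t0 : 0 <= t) by apply sqrt_pos.
assert (t1 : t < 1) by (unfold t; rewrite <- sqrt_1; apply sqrt_lt_1_alt; lra).
assert (Hbound : forall N, INR N * t ^ N <= / (1 - t)).
{ intros N; rewrite INRE RpowE; apply/RleP; apply: natmul_expr_le.
  by apply/andP; split; [apply/RleP | apply/RltP]. }
destruct (pow_lt_1_zero t ltac:(rewrite Rabs_pos_eq; lra) (eps * (1 - t))) as [N0 HN0];
  [nra|].
exists (S N0); split; [reflexivity|].
specialize (HN0 (S N0) ltac:(lia)); rewrite Rabs_pos_eq in HN0; [|apply pow_le; lra].
replace lam with (t * t) by (apply sqrt_sqrt; lra); rewrite Rpow_mult_distr.
specialize (Hbound (S N0)); assert (0 <= t ^ S N0) by (apply pow_le; lra).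
apply Rle_lt_trans with (/ (1 - t) * t ^ S N0); [nra|].
apply (Rmult_lt_reg_l (1 - t)); [lra|]; rewrite <- Rmult_assoc, Rinv_r; lra.
Qed.

End Limits.

Section Slices.

Definition imag_unit (I : quat) : Prop :=
  qre I = 0 /\ qi I * qi I + qj I * qj I + qk I * qk I = 1.

(* The slice [R + R I] of H, identified with C through [x + y i |-> x + y I]. *)
Definition slice (I : quat) (z : R[i]) : quat :=
  Quat (Re z) (Im z * qi I) (Im z * qj I) (Im z * qk I).

Lemma complex_mulE (a b c d : R) :
  (Complex a b * Complex c d)%R = Complex (a * c - b * d) (a * d + b * c).
Proof. by []. Qed.

Lemma normc_ge0_R z : 0 <= normc z.
Proof. apply/RleP; exact: normc_ge0. Qed.

Lemma normc_scale z (c : R) : normc (z * c%:C%C)%R = normc z * Rabs c.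
Proof. by rewrite normcM normc_real. Qed.

Lemma slice0 I : slice I 0%R = qzero.
Proof. unfold slice, qzero; simpl; rewrite -R0E; f_equal; ring. Qed.

Lemma sliceM I a b : imag_unit I -> qmul (slice I a) (slice I b) = slice I (a * b)%R.
Proof.
intros [H0 H1]; destruct a as [a1 a2], b as [b1 b2], I as [i0 i1 i2 i3].
cbn [qre qi qj qk] in *; subst i0; rewrite complex_mulE.
unfold slice, qmul; cbn [qre qi qj qk complex.Re complex.Im].
rewrite -?RmultE -?RplusE -?RminusE -?RoppE; f_equal; try ring.
transitivity (a1 * b1 - a2 * b2 * (i1 * i1 + i2 * i2 + i3 * i3)); [ring | rewrite H1; ring].
Qed.

Lemma slice_pow I z k : imag_unit I -> qpow (slice I z) k = slice I (z ^+ k)%R.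
Proof.
intros HI; induction k as [|k IH]; cbn [qpow].
- unfold slice, qone; simpl; rewrite -?R1E -?R0E; f_equal; ring.
- by rewrite IH sliceM // GRing.exprS.
Qed.

Lemma qnorm_slice I z : imag_unit I -> qnorm (slice I z) = normc z.
Proof.
intros [_ H1]; destruct z as [a b]; unfold qnorm, qnorm2, slice, normc; simpl.
rewrite -RsqrtE -!RpowE -RplusE; f_equal.
transitivity (a ^ 2 + b ^ 2 * (qi I * qi I + qj I * qj I + qk I * qk I)); [ring | rewrite H1; ring].
Qed.

Lemma qnorm_imag_unit_mul I c : imag_unit I -> qnorm (qmul I c) = qnorm c.
Proof.
intros [H0 H1]; rewrite qnormM.
replace (qnorm I) with 1; [ring|].
unfold qnorm, qnorm2; rewrite H0 -sqrt_1; f_equal; rewrite <- H1; ring.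
Qed.

Lemma qdot_slice_mul I z p c x : qre I = 0 ->
  qdot p (qmul (qmul (slice I z) c) x)
    = Re z * qdot p (qmul c x) + Im z * qdot p (qmul (qmul I c) x).
Proof.
intros H0; destruct I as [i0 i1 i2 i3]; simpl in H0; subst i0.
unfold slice, qdot, qmul; simpl; ring.
Qed.

Lemma slice_cover q : exists I z, imag_unit I /\ q = slice I z.
Proof.
set (t := sqrt (qi q * qi q + qj q * qj q + qk q * qk q)).
assert (Htt : t * t = qi q * qi q + qj q * qj q + qk q * qk q) by (apply sqrt_sqrt; nra).
destruct (Req_dec t 0) as [h|h].
- exists (Quat 0 1 0 0), (Complex (qre q) 0); split; [split; simpl; ring|].
  rewrite h in Htt; assert (qi q = 0) by nra; assert (qj q = 0) by nra; assert (qk q = 0) by nra.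
  destruct q; unfold slice; simpl in *; f_equal; subst; ring.
- exists (Quat 0 (qi q / t) (qj q / t) (qk q / t)), (Complex (qre q) t); split.
  + split; [reflexivity|]; simpl.
    transitivity ((qi q * qi q + qj q * qj q + qk q * qk q) / (t * t)); [field; exact h|].
    rewrite Htt; field; intros E; apply h; nra.
  + destruct q; unfold slice; simpl in *; f_equal; field; exact h.
Qed.

End Slices.

Section MaximumPrinciple.
Variables (n : nat) (F : quat -> qmat) (a : nat -> nat -> nat -> quat) (M : R).
Hypothesis n_pos : (0 < n)%coq_nat.
Hypothesis F_expansion : forall i j q, (i < n)%coq_nat -> (j < n)%coq_nat -> in_ball q ->
  qcv (fun K => qsum K (fun k => qmul (qpow q k) (a i j k))) (F q i j).
Hypothesis opnorm_le_M : forall q, in_ball q -> opnorm n (F q) <= M.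

Definition phi v x q := vdot n v (mat_vec n (F q) x).
Definition unit_pair v x := vnorm n v <= 1 /\ vnorm n x <= 1.

Definition controls q0 q := forall eta, 0 < eta -> exists del, 0 < del /\
  forall v x, unit_pair v x -> M - phi v x q0 <= del -> M - phi v x q <= eta.

Lemma controls_trans q0 q1 q2 : controls q0 q1 -> controls q1 q2 -> controls q0 q2.
Proof.
intros H01 H12 eta eta_pos; destruct (H12 eta eta_pos) as [d1 [d1_pos Hd1]].
destruct (H01 d1 d1_pos) as [d0 [d0_pos Hd0]].
exists d0; split; [exact d0_pos|]; intros v x Hvx H; apply Hd1, Hd0; assumption.
Qed.

Lemma phi_le_opnorm v x q : unit_pair v x -> phi v x q <= opnorm n (F q).
Proof.
intros [Hv Hx]; unfold phi.
pose proof (vdot_cauchy_schwarz n v (mat_vec n (F q) x)).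
pose proof (opnorm_mul_le n n_pos (F q) x); pose proof (opnorm_ge0 n n_pos (F q)).
pose proof (vnorm_ge0 n v); pose proof (vnorm_ge0 n x); pose proof (vnorm_ge0 n (mat_vec n (F q) x)).
nra.
Qed.

Lemma phi_le_M v x q : unit_pair v x -> in_ball q -> phi v x q <= M.
Proof. intros Hvx Hq; eapply Rle_trans; [apply phi_le_opnorm, Hvx | apply opnorm_le_M, Hq]. Qed.

Definition phi_partial v x q K :=
  vdot n v (fun i => qsum n (fun j => qmul (qsum K (fun k => qmul (qpow q k) (a i j k))) (x j))).

Lemma phi_partial_cv v x q : in_ball q -> Un_cv (phi_partial v x q) (phi v x q).
Proof.
intros Hq; apply (Un_cv_vdot n v
  (fun K i => qsum n (fun j => qmul (qsum K (fun k => qmul (qpow q k) (a i j k))) (x j)))).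
intros i Hi; apply (qcv_qsum n (fun j K => qmul (qsum K (fun k => qmul (qpow q k) (a i j k))) (x j))).
intros j Hj; apply qcv_mulr, F_expansion; assumption.
Qed.

Definition pairing (b : nat -> nat -> quat) v x :=
  rsum n (fun i => rsum n (fun j => qdot (v i) (qmul (b i j) (x j)))).

Definition slice_coef I v x k : R[i] :=
  Complex (pairing (fun i j => a i j k) v x) (- pairing (fun i j => qmul I (a i j k)) v x).

Lemma phi_partial_slice I v x z K : imag_unit I ->
  phi_partial v x (slice I z) K = Re (\sum_(k < K) slice_coef I v x k * z ^+ k)%R.
Proof.
intros HI; induction K as [|K IH].
- rewrite big_ord0; unfold phi_partial, vdot; simpl; rewrite -R0E.
  transitivity (rsum n (fun _ => 0)); [|rewrite rsum_const; ring].
  apply rsum_ext; intros i _; rewrite qdot_qsum.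
  transitivity (rsum n (fun _ => 0)); [|rewrite rsum_const; ring].
  apply rsum_ext; intros j _; unfold qdot, qmul; simpl; ring.
- rewrite big_ord_recr raddfD /= -IH -RplusE; unfold phi_partial.
  rewrite (vdot_ext n v _ (fun i => qadd
     (qsum n (fun j => qmul (qsum K (fun k => qmul (qpow (slice I z) k) (a i j k))) (x j)))
     (qsum n (fun j => qmul (qmul (qpow (slice I z) K) (a i j K)) (x j))))).
  2:{ intros i _; rewrite <- qsum_qadd; apply qsum_ext; intros j _; apply qmul_qadd_l. }
  rewrite vdot_qadd; f_equal.
  rewrite slice_pow //; set (y := (z ^+ K)%R).
  transitivity (Re y * pairing (fun i j => a i j K) v x
                + Im y * pairing (fun i j => qmul I (a i j K)) v x).
  + unfold vdot, pairing; rewrite -!rsum_scal -rsum_plus; apply rsum_ext; intros i _.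
    rewrite qdot_qsum -!rsum_scal -rsum_plus; apply rsum_ext; intros j _.
    apply qdot_slice_mul, (proj1 HI).
  + unfold slice_coef; destruct y as [yr yi]; rewrite complex_mulE; simpl.
    rewrite -?RmultE -?RminusE -?RoppE; ring.
Qed.

Definition coef_mass k := rsum n (fun i => rsum n (fun j => qnorm (a i j k))).

Lemma pairing_abs_le b v x : unit_pair v x ->
  Rabs (pairing b v x) <= rsum n (fun i => rsum n (fun j => qnorm (b i j))).
Proof.
intros [Hv Hx]; unfold pairing.
eapply Rle_trans; [apply rsum_abs_le|]; apply rsum_le; intros i Hi.
eapply Rle_trans; [apply rsum_abs_le|]; apply rsum_le; intros j Hj.
eapply Rle_trans; [apply qdot_abs_le|]; rewrite qnormM.
pose proof (qnorm_le_vnorm n v i Hi); pose proof (qnorm_le_vnorm n x j Hj).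
pose proof (qnorm_ge0 (v i)); pose proof (qnorm_ge0 (x j)); pose proof (qnorm_ge0 (b i j)).
assert (qnorm (v i) * qnorm (x j) <= 1) by nra.
nra.
Qed.

Lemma normc_slice_coef_le I v x k : imag_unit I -> unit_pair v x ->
  normc (slice_coef I v x k) <= 2 * coef_mass k.
Proof.
intros HI Hvx; unfold slice_coef; eapply Rle_trans; [apply/RleP; apply: (normc_le_abs (R := R))|].
rewrite normrN; change (Rabs (pairing (fun i j => a i j k) v x)
  + Rabs (pairing (fun i j => qmul I (a i j k)) v x) <= 2 * coef_mass k).
pose proof (pairing_abs_le (fun i j => a i j k) v x Hvx) as Hre.
pose proof (pairing_abs_le (fun i j => qmul I (a i j k)) v x Hvx) as Him.
erewrite rsum_ext in Him; [|intros i _; apply rsum_ext; intros j _; apply qnorm_imag_unit_mul, HI].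
unfold coef_mass; lra.
Qed.

Lemma coef_entry_bound rho i j : 0 <= rho < 1 -> (i < n)%coq_nat -> (j < n)%coq_nat ->
  exists c, forall k, qnorm (a i j k) * rho ^ k <= c.
Proof.
intros [rho0 rho1] Hi Hj; set (q := Quat rho 0 0 0).
assert (Hq : qnorm q = rho).
{ unfold q, qnorm, qnorm2; cbn [qre qi qj qk].
  replace (rho ^ 2 + 0 ^ 2 + 0 ^ 2 + 0 ^ 2) with (rho ^ 2) by ring; apply sqrt_pow2, rho0. }
destruct (qcv_series_terms_bounded _ _ (F_expansion i j q Hi Hj ltac:(unfold in_ball; lra)))
  as [c Hc].
exists c; intros k; specialize (Hc k); rewrite qnormM qnorm_qpow Hq in Hc; lra.
Qed.

Lemma coef_mass_bound rho : 0 <= rho < 1 -> exists C, 0 <= C /\ forall k, coef_mass k * rho ^ k <= C.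
Proof.
intros Hrho.
destruct (exists_common_bound n
  (fun i c => forall j k, (j < n)%coq_nat -> qnorm (a i j k) * rho ^ k <= c)) as [C HC].
- intros i c c' H Hc j k Hj; specialize (H j k Hj); lra.
- intros i Hi; destruct (exists_common_bound n
    (fun j c => forall k, qnorm (a i j k) * rho ^ k <= c)) as [c Hc].
  + intros j c c' H Hc k; specialize (H k); lra.
  + intros j Hj; apply coef_entry_bound; assumption.
  + exists c; intros j k Hj; apply Hc, Hj.
- exists (INR n * (INR n * Rmax C 0)); split.
  { pose proof (pos_INR n); pose proof (Rmax_r C 0); nra. }
  intros k; unfold coef_mass; rewrite Rmult_comm -rsum_scal -!rsum_const.
  apply rsum_le; intros i Hi; rewrite -rsum_scal; apply rsum_le; intros j Hj.
  rewrite Rmult_comm; eapply Rle_trans; [apply HC; assumption | apply Rmax_l].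
Qed.

Lemma slice_coef_decay I rho : imag_unit I -> 0 <= rho < 1 ->
  exists D lam, 0 <= D /\ 0 <= lam < 1 /\
    forall v x k, unit_pair v x -> normc (slice_coef I v x k) * rho ^ k <= D * lam ^ k.
Proof.
(* Use the coefficient bound at the larger radius [(1 + rho) / 2]. *)
intros HI [rho0 rho1]; set (rho' := (1 + rho) / 2).
destruct (coef_mass_bound rho' ltac:(unfold rho'; lra)) as [C [C0 HC]].
exists (2 * C), (rho / rho'); split; [lra|]; split.
{ split; [apply Rdiv_le_0_compat | apply (Rdiv_lt_1 rho rho')]; unfold rho'; lra. }
intros v x k Hvx.
replace rho with (rho / rho' * rho') at 1 by (field; unfold rho'; lra).
rewrite Rpow_mult_distr.
pose proof (normc_slice_coef_le I v x k HI Hvx); pose proof (HC k).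
assert (0 <= (rho / rho') ^ k) by (apply pow_le, Rdiv_le_0_compat; unfold rho'; lra).
assert (0 <= rho' ^ k) by (apply pow_le; unfold rho'; lra).
assert (normc (slice_coef I v x k) * rho' ^ k <= 2 * C) by nra.
nra.
Qed.

Lemma in_ball_slice_circle I z0 w N j : imag_unit I -> normc z0 + normc w < 1 ->
  in_ball (slice I (z0 + w * root_unity N ^+ j)%R).
Proof.
intros HI Hz; unfold in_ball; rewrite qnorm_slice //.
eapply Rle_lt_trans; [apply/RleP; apply: normc_circle_le; apply normc_root_unity | exact Hz].
Qed.

Lemma phi_mean_value I z0 w eps : imag_unit I -> normc z0 + normc w < 1 -> 0 < eps ->
  exists N, (0 < N)%N /\ forall v x, unit_pair v x ->
    Rabs (rsum N (fun j => phi v x (slice I (z0 + w * root_unity N ^+ j)%R))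
          - INR N * phi v x (slice I z0)) <= eps.
Proof.
intros HI Hz eps_pos; pose proof (normc_ge0_R z0); pose proof (normc_ge0_R w).
destruct (slice_coef_decay I (normc z0 + normc w) HI ltac:(lra)) as [D [lam [D0 [lam01 Hdecay]]]].
destruct (exists_nat_mul_pow_lt lam (eps * (1 - lam) / (2 * D + 1)) lam01) as [N [N_pos HN]].
{ apply Rdiv_lt_0_compat; [apply Rmult_lt_0_compat|]; lra. }
exists N; split; [exact N_pos|]; intros v x Hvx.
assert (Hz0 : in_ball (slice I z0)) by (unfold in_ball; rewrite qnorm_slice //; lra).
apply (Un_cv_abs_le (fun K => rsum N (fun j => phi_partial v x (slice I (z0 + w * root_unity N ^+ j)%R) K)
                              - INR N * phi_partial v x (slice I z0) K)).
- apply CV_minus; [apply Un_cv_rsum; intros j _|apply Un_cv_scal]; apply phi_partial_cv;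
    [apply in_ball_slice_circle; assumption | exact Hz0].
- intros K; rewrite phi_partial_slice //.
  erewrite rsum_ext; [|intros j _; apply phi_partial_slice, HI].
  eapply Rle_trans; [apply mean_value_defect_root_unity; [exact N_pos | exact lam01 | ]|].
  { intros k; apply Hdecay, Hvx. }
  set (X := INR N * lam ^ N) in *.
  assert (0 <= X) by (apply Rmult_le_pos; [apply pos_INR | apply pow_le; lra]).
  replace (2 * INR N * D * (lam ^ N / (1 - lam))) with (2 * D * X / (1 - lam)) by (unfold X; field; lra).
  apply Rle_div_l; [lra|].
  apply (Rmult_lt_compat_r (2 * D + 1)) in HN; [|lra].
  replace (eps * (1 - lam) / (2 * D + 1) * (2 * D + 1)) with (eps * (1 - lam)) in HN by (field; lra).
  nra.
Qed.

(* Sub-mean value property of [M - phi] on the circle of centre [z0] through [z1]. *)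
Lemma controls_circle I z0 z1 : imag_unit I -> normc z0 + normc (z1 - z0)%R < 1 ->
  controls (slice I z0) (slice I z1).
Proof.
intros HI Hz eta eta_pos; set (w := (z1 - z0)%R) in *.
destruct (phi_mean_value I z0 w (eta / 2) HI Hz ltac:(lra)) as [N [N_pos Hmean]].
assert (HN : 0 < INR N) by (apply lt_0_INR; apply/ssrnat.ltP; exact N_pos).
exists (eta / (2 * INR N)); split; [apply Rdiv_lt_0_compat; lra|]; intros v x Hvx Hdel.
assert (Hz1 : (z0 + w * root_unity N ^+ 0)%R = z1) by (rewrite expr0 mulr1 addrC subrK //).
assert (Hsum : M - phi v x (slice I z1)
               <= rsum N (fun j => M - phi v x (slice I (z0 + w * root_unity N ^+ j)%R))).
{ rewrite -{1}Hz1; apply (rsum_term_le N (fun j => M - phi v x (slice I (z0 + w * root_unity N ^+ j)%R)));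
    [intros j _ | apply/ssrnat.ltP; exact N_pos].
  apply Rge_le, Rge_minus, Rle_ge, (phi_le_M v x _ Hvx (in_ball_slice_circle I z0 w N j HI Hz)). }
rewrite rsum_minus rsum_const in Hsum.
specialize (Hmean v x Hvx).
set (S := rsum N (fun j => phi v x (slice I (z0 + w * root_unity N ^+ j)%R))) in *.
(* [Hmean] spells [^+] with other (convertible) instances; [change] aligns it for [lra]. *)
change (Rabs (S - INR N * phi v x (slice I z0)) <= eta / 2) in Hmean.
pose proof (Rle_abs (- (S - INR N * phi v x (slice I z0)))) as Habs.
rewrite Rabs_Ropp in Habs.
assert (INR N * (M - phi v x (slice I z0)) <= eta / 2).
{ replace (eta / 2) with (INR N * (eta / (2 * INR N))) by (field; lra).
  apply Rmult_le_compat_l; lra. }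
lra.
Qed.

(* One step replaces [z] by [c z] with [1 - |c z| = 3/2 (1 - |z|)]. *)
Lemma controls_to_origin I m z : imag_unit I -> normc z < 1 - / 2 * (2 / 3) ^ m ->
  controls (slice I z) qzero.
Proof.
intros HI; revert z; induction m as [|m IH]; intros z Hz; rewrite -(slice0 I).
- apply controls_circle; [exact HI|]; rewrite sub0r normcN; simpl in Hz; lra.
- pose proof (pow_lt (2 / 3) m ltac:(lra)); simpl in Hz.
  destruct (Rlt_or_le (normc z) (/ 2)) as [h|h].
  + apply controls_circle; [exact HI|]; rewrite sub0r normcN; lra.
  + set (t := normc z) in *; set (c := (3 * t - 1) / (2 * t)).
    assert (Hc : 0 < c < 1).
    { unfold c; split; [apply Rdiv_lt_0_compat | apply (Rdiv_lt_1 _ (2 * t))]; lra. }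
    apply controls_trans with (slice I (z * c%:C%C)%R).
    * apply controls_circle; [exact HI|].
      have -> : (z * c%:C%C - z = z * (c - 1)%:C%C)%R by rewrite rmorphB rmorph1 mulrBr mulr1.
      rewrite normc_scale -RminusE -R1E; fold t; rewrite Rabs_minus_sym Rabs_pos_eq; [|lra].
      replace (t * (1 - c)) with ((1 - t) / 2) by (unfold c; field; lra); lra.
    * rewrite slice0; apply IH; rewrite normc_scale Rabs_pos_eq; [|lra]; fold t.
      replace (t * c) with ((3 * t - 1) / 2) by (unfold c; field; lra); lra.
Qed.

Lemma controls_ball q0 q : in_ball q0 -> in_ball q -> controls q0 q.
Proof.
intros Hq0 Hq.
destruct (slice_cover q0) as [I [z [HI ->]]], (slice_cover q) as [J [z' [HJ ->]]].
unfold in_ball in Hq0, Hq; rewrite qnorm_slice in Hq0 => //; rewrite qnorm_slice in Hq => //.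
apply controls_trans with qzero.
- destruct (pow_lt_1_zero (2 / 3) ltac:(rewrite Rabs_pos_eq; lra) (2 * (1 - normc z)))
    as [m Hm]; [lra|].
  apply (controls_to_origin I m z HI).
  specialize (Hm m (Nat.le_refl m)); rewrite Rabs_pos_eq in Hm; [lra | apply pow_le; lra].
- rewrite -(slice0 J); apply controls_circle; [exact HJ|].
  rewrite subr0 normc0 -R0E; lra.
Qed.

Lemma max_opnorm_everywhere q0 q : opnorm n (F q0) = M -> in_ball q0 -> in_ball q ->
  opnorm n (F q) = M.
Proof.
intros HM0 Hq0 Hq; apply Rle_antisym; [apply opnorm_le_M, Hq|].
apply Rnot_lt_le; intros Hlt; set (eta := (M - opnorm n (F q)) / 2).
destruct (controls_ball q0 q Hq0 Hq eta ltac:(unfold eta; lra)) as [del [del_pos Hdel]].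
destruct (opnorm_approx n n_pos (F q0) del del_pos) as [v [x [Hv [Hx Happrox]]]].
assert (Hvx : unit_pair v x) by (split; assumption).
pose proof (Hdel v x Hvx ltac:(unfold phi; lra)).
pose proof (phi_le_opnorm v x q Hvx); unfold eta in *; lra.
Qed.

End MaximumPrinciple.

Lemma mat_regular_coef n F : mat_regular n F ->
  exists a : nat -> nat -> nat -> quat, forall i j q,
    (i < n)%coq_nat -> (j < n)%coq_nat -> in_ball q ->
    qcv (fun K => qsum K (fun k => qmul (qpow q k) (a i j k))) (F q i j).
Proof.
intros Hreg.
destruct (ClassicalEpsilon.choice (fun (ij : nat * nat) (b : nat -> quat) =>
  (fst ij < n)%coq_nat -> (snd ij < n)%coq_nat -> forall q, in_ball q ->
    qcv (fun K => qsum K (fun k => qmul (qpow q k) (b k))) (F q (fst ij) (snd ij))))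
  as [f Hf].
- intros [i j]; destruct (classic ((i < n)%coq_nat /\ (j < n)%coq_nat)) as [[Hi Hj]|Hij].
  + destruct (Hreg i j Hi Hj) as [b Hb]; exists b; auto.
  + exists (fun _ => qzero); intros Hi Hj; tauto.
- exists (fun i j => f (i, j)); intros i j q Hi Hj Hq; apply (Hf (i, j)); assumption.
Qed.

Theorem theorem3p3 (n : nat) (F : quat -> qmat) :
  mat_regular n F ->
  (exists q0, in_ball q0 /\ forall q, in_ball q -> opnorm n (F q) <= opnorm n (F q0)) ->
  forall q1 q2, in_ball q1 -> in_ball q2 -> opnorm n (F q1) = opnorm n (F q2).
Proof.
intros Hreg [q0 [Hq0 Hmax]] q1 q2 Hq1 Hq2.
destruct n as [|m]; [rewrite !opnorm_dim0; reflexivity|].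
destruct (mat_regular_coef _ F Hreg) as [a Ha].
assert (Hconst : forall q, in_ball q -> opnorm (S m) (F q) = opnorm (S m) (F q0)).
{ intros q Hq; apply (max_opnorm_everywhere (S m) F a _ ltac:(lia) Ha Hmax q0 q); auto. }
rewrite (Hconst q1 Hq1) (Hconst q2 Hq2); reflexivity.
Qed.
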